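(* Let $(G,d_G)$ be a countable group with a proper left invariant metric and let $f:\mathbb N\to\mathbb N$ be a function. If every finitely generated subgroup $H$ of $G$ (with the restricted metric) is of growth type at most $f$, then $G$ is of growth type at most $f$.
   Context: A proper left invariant metric on $G$ is $d(g,h)=\|g^{-1}h\|$ for a proper norm ($\|g\|=0$ iff $g=1$, $\|g\|=\|g^{-1}\|$, subadditive, finite balls). For $s>0$, an $s$-scale chain of length $m$ from $x$ to $y$ in a metric space is a sequence $x=x_0,\dots,x_m=y$ with $d(x_i,x_{i+1})<s$. For $g$ in a metric space $X$, $s>0$, $n\in\mathbb N$, let $A_g^{(n,s)}$ be the set of points $h\in X$ joined to $g$ by an $s$-scale chain of length $n$ in $X$, and $gr_{(s,g)}(n)=\#A_g^{(n,s)}$. For functions $u,v$, $u\preceq v$ means there is $C>0$ with $u(x)\le C\,v(Cx)$ for all sufficiently large $x$. $X$ is of growth type at most $f$ if $gr_{(s,g)}\preceq f$ for all $g\in X$, $s>0$. *)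

From Stdlib Require Import Reals List.
Open Scope R_scope.

Record group := Group {
  gcar :> Type;
  gmul : gcar -> gcar -> gcar;
  ginv : gcar -> gcar;
  gone : gcar;
  gmulA : forall x y z, gmul x (gmul y z) = gmul (gmul x y) z;
  gmul1l : forall x, gmul gone x = x;
  gmul1r : forall x, gmul x gone = x;
  gmulVl : forall x, gmul (ginv x) x = gone;
  gmulVr : forall x, gmul x (ginv x) = gone
}.

Definition countable_group (G : group) : Prop :=
  exists e : G -> nat, forall x y, e x = e y -> x = y.

Definition proper_norm (G : group) (N : G -> R) : Prop :=
  (forall g, N g = 0 <-> g = gone G) /\
  (forall g, N g = N (ginv G g)) /\
  (forall g h, N (gmul G g h) <= N g + N h) /\
  (forall r : R, exists l : list G, forall g, N g <= r -> In g l).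

Definition norm_dist (G : group) (N : G -> R) (g h : G) : R :=
  N (gmul G (ginv G g) h).

Inductive gen (G : group) (l : list G) : G -> Prop :=
| gen_in : forall x, In x l -> gen G l x
| gen_one : gen G l (gone G)
| gen_mul : forall x y, gen G l x -> gen G l y -> gen G l (gmul G x y)
| gen_inv : forall x, gen G l x -> gen G l (ginv G x).

(* A metric space is given by a subset P of a type X with metric d restricted
   to P. An s-scale chain of length n from x to y inside P. *)
Definition scale_chain {X : Type} (d : X -> X -> R) (P : X -> Prop)
  (s : R) (n : nat) (x y : X) : Prop :=
  exists c : nat -> X,
    c O = x /\ c n = y /\
    (forall i, (i <= n)%nat -> P (c i)) /\
    (forall i, (i < n)%nat -> d (c i) (c (S i)) < s).

Definition Aset {X : Type} (d : X -> X -> R) (P : X -> Prop)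
  (g : X) (n : nat) (s : R) : X -> Prop :=
  fun h => P h /\ scale_chain d P s n g h.

Definition card_le {X : Type} (A : X -> Prop) (k : nat) : Prop :=
  exists l : list X, (length l <= k)%nat /\ forall x, A x -> In x l.

Definition gr_preceq {X : Type} (d : X -> X -> R) (P : X -> Prop)
  (g : X) (s : R) (f : nat -> nat) : Prop :=
  exists C : nat, (0 < C)%nat /\
    exists n0 : nat, forall n, (n0 <= n)%nat ->
      card_le (Aset d P g n s) (C * f (C * n))%nat.

Definition growth_at_most {X : Type} (d : X -> X -> R) (P : X -> Prop)
  (f : nat -> nat) : Prop :=
  forall g, P g -> forall s : R, 0 < s -> gr_preceq d P g s f.

From Stdlib Require Import Reals List Lra Lia.

(* An s-scale chain starting at g only makes steps c_i^{-1} c_{i+1} of norm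
   less than s, and the s-ball is finite by properness.  So every chain from g
   stays inside the finitely generated subgroup H = <g, ball(s)>, and the sets
   A_g^{(n,s)} computed in G and in H coincide; the growth bound for H is
   therefore one for G. *)

Lemma card_le_sub {X : Type} (A B : X -> Prop) (k : nat) :
  (forall x, A x -> B x) -> card_le B k -> card_le A k.
Proof.
  intros AB [l [Hlen Hl]].
  exists l; split; [exact Hlen |].
  intros x Ax; apply Hl, AB, Ax.
Qed.

Lemma gr_preceq_sub {X : Type} (d : X -> X -> R) (P Q : X -> Prop)
  (g : X) (s : R) (f : nat -> nat) :
  (forall n h, Aset d P g n s h -> Aset d Q g n s h) ->
  gr_preceq d Q g s f -> gr_preceq d P g s f.
Proof.
  intros PQ [C [HC [n0 Hn0]]].
  exists C; split; [exact HC |].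
  exists n0; intros n Hn.
  apply (card_le_sub _ _ _ (PQ n)), Hn0, Hn.
Qed.

Lemma gen_step (G : group) (l : list G) (x y : G) :
  gen G l x -> In (gmul G (ginv G x) y) l -> gen G l y.
Proof.
  intros Hx Hxy.
  assert (Ey : y = gmul G x (gmul G (ginv G x) y)).
  { rewrite gmulA, gmulVr, gmul1l; reflexivity. }
  rewrite Ey; apply gen_mul; [exact Hx | apply gen_in, Hxy].
Qed.

Lemma scale_chain_in_gen (G : group) (N : G -> R) (s : R) (L : list G)
  (g : G) (n : nat) (c : nat -> G) :
  (forall x, N x <= s -> In x L) ->
  c O = g ->
  (forall i, (i < n)%nat -> norm_dist G N (c i) (c (S i)) < s) ->
  forall i, (i <= n)%nat -> gen G (g :: L) (c i).
Proof.
  intros HL H0 Hs i; induction i as [| i IH]; intros Hi.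
  - rewrite H0; apply gen_in; left; reflexivity.
  - apply (gen_step G _ (c i)).
    + apply IH; lia.
    + right; apply HL.
      specialize (Hs i Hi); unfold norm_dist in Hs; lra.
Qed.

Lemma Aset_full_in_gen (G : group) (N : G -> R) (s : R) (L : list G) (g : G) :
  (forall x, N x <= s -> In x L) ->
  forall n h,
    Aset (norm_dist G N) (fun _ : G => True) g n s h ->
    Aset (norm_dist G N) (gen G (g :: L)) g n s h.
Proof.
  intros HL n h [_ [c [H0 [Hn [_ Hd]]]]].
  pose proof (scale_chain_in_gen G N s L g n c HL H0 Hd) as Hc.
  split.
  - rewrite <- Hn; apply Hc; lia.
  - exists c; repeat split; assumption.
Qed.

Theorem mainTheorem6 (G : group) (N : G -> R) (f : nat -> nat) :
  countable_group G ->
  proper_norm G N ->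
  (forall l : list G, growth_at_most (norm_dist G N) (gen G l) f) ->
  growth_at_most (norm_dist G N) (fun _ : G => True) f.
Proof.
  intros _ [_ [_ [_ Hballs]]] Hsub g _ s Hs.
  destruct (Hballs s) as [L HL].
  apply (gr_preceq_sub _ _ (gen G (g :: L))).
  - exact (Aset_full_in_gen G N s L g HL).
  - apply Hsub; [apply gen_in; left; reflexivity | exact Hs].
Qed.
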